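(* Let $f_1,\ldots,f_{KN}$ be drawn i.i.d. from a distribution $\mathcal{F}$ over types, let $\widehat{p}(\mathbf{b}^{(i)})=\frac1N\sum_{\tau=1}^N\mathbb{1}\{b_{f_{(i-1)N+\tau}}(\mathbf{x}^{(\mathbf{b}^{(i)})})=a^{(\mathbf{b}^{(i)})}\}$ for $i\in[K]$, and $\widehat{p}(\mathbf{w})=\sum_{i=1}^K\lambda_i(\mathbf{w})\widehat{p}(\mathbf{b}^{(i)})$ for $\mathbf{w}\in\mathcal{W}$. Let $p(\mathbf{w})=\sum_{i=1}^K\mathbf{w}[i]\Pr_{f\sim\mathcal{F}}(f=\alpha^{(i)})$. Then for any sequence of mixed strategies $\mathbf{x}_{NK+1},\ldots,\mathbf{x}_T$, with probability at least $1-\frac1T$, $$\sum_{t=NK+1}^T\sum_{a_f\in\mathcal{A}_f}\big|\widehat{p}(\mathbb{1}_{(\sigma^{(\mathbf{x}_t)}=a_f)})-p(\mathbb{1}_{(\sigma^{(\mathbf{x}_t)}=a_f)})\big|\le 2A_fT\sqrt{\frac{K\log T}{N}}.$$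
   Context: Finite leader actions $\mathcal{A}$, finite follower actions $\mathcal{A}_f$ with $A_f=|\mathcal{A}_f|$, follower types $\alpha^{(1)},\ldots,\alpha^{(K)}$ with context-independent utilities $u_{\alpha^{(i)}}:\mathcal{A}\times\mathcal{A}_f\to[0,1]$; for $\mathbf{x}\in\Delta(\mathcal{A})$, $b_f(\mathbf{x})\in\arg\max_{a_f}\sum_{a_l}\mathbf{x}[a_l]u_f(a_l,a_f)$, ties broken by a fixed ordering. $\sigma^{(\mathbf{x})}$ maps $\alpha^{(i)}\mapsto b_{\alpha^{(i)}}(\mathbf{x})$; $\Sigma=\{\sigma^{(\mathbf{x})}\}$. For $\sigma\in\Sigma$, $a_f\in\mathcal{A}_f$, $\mathbb{1}_{(\sigma=a_f)}\in\{0,1\}^K$ has $i$-th entry $\mathbb{1}\{\sigma(\alpha^{(i)})=a_f\}$; $\mathcal{W}$ is the set of these vectors. $\mathcal{B}=\{\mathbf{b}^{(1)},\ldots,\mathbf{b}^{(K)}\}\subseteq\mathcal{W}$ is a barycentric spanner (each $\mathbf{w}\in\mathcal{W}$ equals $\sum_i\lambda_i(\mathbf{w})\mathbf{b}^{(i)}$ with $\lambda_i(\mathbf{w})\in[-1,1]$), and $\mathbf{x}^{(\mathbf{b})},a^{(\mathbf{b})}$ satisfy $\mathbf{b}=\mathbb{1}_{(\sigma^{(\mathbf{x}^{(\mathbf{b})})}=a^{(\mathbf{b})})}$. Here $T\ge KN$. *)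

From HB Require Import structures.
From mathcomp Require Import all_boot all_order all_algebra.
From mathcomp Require Import all_classical all_reals.
From mathcomp Require Import exp.
Set Implicit Arguments. Unset Strict Implicit. Unset Printing Implicit Defensive.
Import Order.TTheory GRing.Theory Num.Theory.
Local Open Scope ring_scope.

Section Defs.
Variables (R : realType) (AL : finType) (nf : nat).
(* follower actions: 'I_nf.+1, so A_f = nf.+1; the fixed tie-breaking ordering
   is the natural order of 'I_nf.+1 *)

Definition is_mixed (x : AL -> R) : Prop :=
  (forall a, 0 <= x a) /\ \sum_(a : AL) x a = 1.

Definition exp_util (u : AL -> 'I_nf.+1 -> R) (x : AL -> R) (af : 'I_nf.+1) : R :=
  \sum_(al : AL) x al * u al af.

Definition best_resp (u : AL -> 'I_nf.+1 -> R) (x : AL -> R) : 'I_nf.+1 :=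
  let s := enum 'I_nf.+1 in
  nth ord0 s
    (find (fun af => [forall af', exp_util u x af' <= exp_util u x af]) s).

(* the vector 1_{(sigma^(x) = af)} in {0,1}^K, for K follower types *)
Definition ind_vec (K : nat) (u : 'I_K -> AL -> 'I_nf.+1 -> R)
  (x : AL -> R) (af : 'I_nf.+1) : {ffun 'I_K -> bool} :=
  [ffun i => best_resp (u i) x == af].

(* probability of an event under KN i.i.d. draws from q over the K types;
   samples indexed by (i, tau) in [K] x [N], i.e. sample number (i-1)N+tau *)
Definition iid_prob (K N : nat) (q : 'I_K -> R)
  (E : {ffun 'I_K * 'I_N -> 'I_K} -> bool) : R :=
  \sum_(f : {ffun 'I_K * 'I_N -> 'I_K} | E f) \prod_(j : 'I_K * 'I_N) q (f j).

End Defs.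

(* Through its barycentric coordinates lambda(w) in [-1, 1]^K, every deviation
   phat(w) - p(w) is a weighted sum of the errors of the K independent empirical
   frequencies estimating the spanner vectors.  Hoeffding's inequality (the Chernoff
   bound combined with Hoeffding's lemma for Bernoulli variables) bounds the
   probability that such a sum exceeds eps = 2 sqrt (K log T / N) in absolute value
   by 2 T^-8.  In a round, the vectors 1_(sigma^(x) = a_f) take at most K + 1 distinct
   values (that of the best response of some type, or zero), so a union bound over
   (T + 1)(K + 1) events leaves failure probability at most 1/T; off that event each
   of the at most A_f T summands is at most eps. *)

From mathcomp Require Import all_boot all_order all_algebra.
From mathcomp Require Import all_classical all_reals all_analysis.
From mathcomp Require Import ring lra zify.
Set Implicit Arguments. Unset Strict Implicit. Unset Printing Implicit Defensive.
Import Order.TTheory GRing.Theory Num.Theory.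
Import numFieldNormedType.Exports.
Local Open Scope ring_scope.

Section MeanValue.
Variables (R : realType) (f df : R -> R).
Hypothesis f_derive : forall x, is_derive x (1 : R) f (df x).

Lemma MVT_from0 {y : R} : y != 0 ->
  exists2 c, 0 < c * y & f y - f 0 = df c * y.
Proof.
have f_cont : continuous f.
  by move=> x; apply/differentiable_continuous/derivable1_diffP; case: (f_derive x).
move=> y_neq0; have [y_lt0|y_gt0|y0] := ltgtP y 0.
- have [c] := MVT y_lt0 (fun x _ => f_derive x) (continuous_subspaceT f_cont).
  rewrite in_itv /= sub0r => /andP[_ c_lt0] fyc.
  by exists c; rewrite ?nmulr_rgt0 // -opprB fyc mulrN opprK.
- have [c] := MVT y_gt0 (fun x _ => f_derive x) (continuous_subspaceT f_cont).
  by rewrite in_itv /= subr0 => /andP[c_gt0 _] ->; exists c; rewrite ?mulr_gt0.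
- by rewrite y0 eqxx in y_neq0.
Qed.

Lemma mulr_le0_of_derive_le0 : f 0 = 0 -> (forall x, df x <= 0) ->
  forall y, y * f y <= 0.
Proof.
move=> f0 df_le0 y; have [->|y_neq0] := eqVneq y 0; first by rewrite mul0r.
have [c _] := MVT_from0 y_neq0; rewrite f0 subr0 => ->.
by have := df_le0 c; nra.
Qed.

Lemma le0_of_derive_mulr_le0 : f 0 = 0 -> (forall x, x * df x <= 0) ->
  forall y, f y <= 0.
Proof.
move=> f0 df_sign y; have [->|y_neq0] := eqVneq y 0; first by rewrite f0.
have [c cy_gt0] := MVT_from0 y_neq0; rewrite f0 subr0 => ->.
have := df_sign c; nra.
Qed.

End MeanValue.

Section HoeffdingLemma.
Variables (R : realType) (p : R).
Hypothesis p01 : 0 <= p <= 1.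

Let mgf (y : R) := 1 - p + p * expR y.
(* The mean of Bernoulli(p) tilted by exp (y B); its variance tilt (1 - tilt) is at
   most 1/4, which is where the 1/8 comes from. *)
Let tilt (y : R) := p * expR y / mgf y.

Lemma mgf_gt0 y : 0 < mgf y.
Proof.
have [p0 p1] := andP p01; have: 0 <= p * expR y by rewrite mulr_ge0 ?expR_ge0.
have := expR_gt0 y; rewrite /mgf; nra.
Qed.

Lemma is_derive_mgf x : is_derive x (1 : R) mgf (p * expR x).
Proof.
rewrite (_ : mgf = cst (1 - p) + p \*: expR); last exact/funext.
by apply: is_derive_eq; rewrite add0r.
Qed.

Lemma is_derive_tilt x : is_derive x (1 : R) tilt (tilt x * (1 - tilt x)).
Proof.
have mgf_neq0 := lt0r_neq0 (mgf_gt0 x).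
have ? := is_deriveV mgf_neq0 (is_derive_mgf x).
rewrite {1}(_ : tilt = (p \*: expR) * (fun y => (mgf y)^-1)); last exact/funext.
by apply: is_derive_eq; rewrite /= /GRing.scale /tilt /=; field.
Qed.

Lemma tilt_dev_mul_le0 y : y * (tilt y - p - y / 4) <= 0.
Proof.
pose psi y := tilt y - p - y / 4.
have psi_derive x : is_derive x (1 : R) psi (tilt x * (1 - tilt x) - 4^-1).
  have ? := is_derive_tilt x.
  rewrite (_ : psi = tilt - cst p - 4^-1 \*: id); last first.
    by apply/funext => z; rewrite /psi /= mulrC.
  by apply: is_derive_eq; rewrite subr0 /GRing.scale /= mulr1.
have psi0 : psi 0 = 0.
  by rewrite /psi /tilt /mgf expR0 mulr1 subrK divr1 subrr mul0r subr0.
have dpsi_le0 x : tilt x * (1 - tilt x) - 4^-1 <= 0.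
  by have := sqr_ge0 (tilt x - 2^-1); rewrite expr2; nra.
exact: (mulr_le0_of_derive_le0 psi_derive psi0 dpsi_le0 y).
Qed.

Lemma ln_mgf_le y : ln (mgf y) <= y * p + y ^+ 2 / 8.
Proof.
pose phi y := ln (mgf y) - y * p - y ^+ 2 / 8.
have phi_derive x : is_derive x (1 : R) phi (tilt x - p - x / 4).
  have mgf_neq0 := lt0r_neq0 (mgf_gt0 x).
  have ? := is_derive1_comp (is_derive1_ln (mgf_gt0 x)) (is_derive_mgf x).
  rewrite (_ : phi = @ln R \o mgf - p \*: id - 8^-1 \*: id ^+ 2); last first.
    by apply/funext => z; rewrite /phi /= [z * p]mulrC [_ / 8]mulrC.
  by apply: is_derive_eq; rewrite /tilt /GRing.scale /= !mulr1 expr1; field.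
suff: phi y <= 0 by rewrite /phi; lra.
apply: (le0_of_derive_mulr_le0 phi_derive _ tilt_dev_mul_le0).
by rewrite /phi /mgf expR0 mulr1 subrK ln1 mul0r expr0n /= mul0r !subr0.
Qed.

(* The left side is E[exp (h (B - p))] for B ~ Bernoulli(p). *)
Lemma hoeffding_lemma_bernoulli (h : R) :
  (1 - p) * expR (- (h * p)) + p * expR (h * (1 - p)) <= expR (h ^+ 2 / 8).
Proof.
have -> : (1 - p) * expR (- (h * p)) + p * expR (h * (1 - p)) =
          expR (- (h * p)) * mgf h.
  have -> : expR (h * (1 - p)) = expR (- (h * p)) * expR h.
    by rewrite -expRD; congr expR; ring.
  by rewrite /mgf; ring.
rewrite -(lnK (mgf_gt0 h)) -expRD ler_expR.
by have := ln_mgf_le h; lra.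
Qed.

End HoeffdingLemma.

Section IidSampling.
Variables (R : realType) (K N : nat) (q : 'I_K -> R).
Hypotheses (q_ge0 : forall k, 0 <= q k) (q_sum1 : \sum_(k < K) q k = 1).

Local Notation sample := {ffun 'I_K * 'I_N -> 'I_K}.
Local Notation Pr := (@iid_prob R K N q).

Definition iid_mean (X : sample -> R) : R :=
  \sum_(f : sample) (\prod_(j : 'I_K * 'I_N) q (f j)) * X f.

Lemma iid_weight_ge0 (f : sample) : 0 <= \prod_(j : 'I_K * 'I_N) q (f j).
Proof. exact: prodr_ge0. Qed.

Lemma iid_meanZ (a : R) (X : sample -> R) :
  iid_mean (fun f => a * X f) = a * iid_mean X.
Proof. by rewrite /iid_mean mulr_sumr; apply: eq_bigr => f _; rewrite mulrCA. Qed.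

Lemma iid_mean_prod (F : 'I_K * 'I_N -> 'I_K -> R) :
  iid_mean (fun f => \prod_j F j (f j)) = \prod_j \sum_(k < K) q k * F j k.
Proof.
rewrite bigA_distr_bigA /=.
by apply: eq_bigr => f _; rewrite big_split.
Qed.

Lemma iid_prob_le_mean (E : sample -> bool) (X : sample -> R) :
  (forall f, 0 <= X f) -> (forall f, E f -> 1 <= X f) -> Pr E <= iid_mean X.
Proof.
move=> X_ge0 X_ge1; rewrite /iid_prob big_mkcond; apply: ler_sum => f _.
case: ifP => [/X_ge1 Xf_ge1|_]; last by rewrite mulr_ge0 ?iid_weight_ge0.
by rewrite -[leLHS]mulr1 ler_wpM2l ?iid_weight_ge0.
Qed.

Lemma iid_prob_predT : Pr predT = 1.
Proof.
transitivity (iid_mean (fun f => \prod_j (fun _ _ => 1) j (f j))).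
  by apply: eq_bigr => f _; rewrite big1_eq mulr1.
by rewrite (iid_mean_prod (fun _ _ => 1)) big1 // => j _; under eq_bigr do rewrite mulr1.
Qed.

Lemma le_iid_prob (E1 E2 : sample -> bool) :
  (forall f, E1 f -> E2 f) -> Pr E1 <= Pr E2.
Proof.
move=> sub12; rewrite /iid_prob [leRHS](bigID E1) /=.
rewrite [X in _ <= X + _](eq_bigl E1) => [|f]; last first.
  by case E1f: (E1 f); rewrite ?andbF ?andbT ?sub12.
by rewrite lerDl sumr_ge0 // => f _; apply: iid_weight_ge0.
Qed.

Lemma iid_probC (E : sample -> bool) : Pr (fun f => ~~ E f) = 1 - Pr E.
Proof. by rewrite -iid_prob_predT /iid_prob [in RHS](bigID E) /= addrAC subrr add0r. Qed.

Lemma iid_prob_exists_le (I : finType) (B : I -> sample -> bool) :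
  Pr (fun f => [exists i, B i f]) <= \sum_(i : I) Pr (B i).
Proof.
under [leRHS]eq_bigr do rewrite /iid_prob big_mkcond.
rewrite exchange_big /= [leLHS]big_mkcond; apply: ler_sum => f _.
have weight_ge0 i : 0 <= if B i f then \prod_j q (f j) else 0.
  by case: ifP => // _; apply: iid_weight_ge0.
case: ifP => [/existsP[i Bif]|_]; last exact: sumr_ge0.
by rewrite (bigD1 i) //= Bif lerDl sumr_ge0.
Qed.

Lemma iid_prob_or_le (E1 E2 : sample -> bool) :
  Pr (fun f => E1 f || E2 f) <= Pr E1 + Pr E2.
Proof.
rewrite /iid_prob [leLHS](bigID E1) /= lerD //.
  by apply: le_iid_prob => f /andP[].
by apply: le_iid_prob => f /andP[] /orP[-> |].
Qed.

Definition emp_freq (Y : 'I_K -> 'I_K -> bool) (f : sample) (i : 'I_K) : R :=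
  N%:R^-1 * \sum_(tau < N) (Y i (f (i, tau)) : nat)%:R.

Definition freq (Y : 'I_K -> 'I_K -> bool) (i : 'I_K) : R :=
  \sum_(k < K) q k * (Y i k : nat)%:R.

Lemma hoeffding_lemma_indicator (Y : 'I_K -> 'I_K -> bool) (i : 'I_K) (h : R) :
  \sum_(k < K) q k * expR (h * ((Y i k : nat)%:R - freq Y i)) <= expR (h ^+ 2 / 8).
Proof.
have freqE : freq Y i = \sum_(k | Y i k) q k.
  rewrite /freq (bigID (Y i)) /= [X in _ + X]big1 ?addr0 => [|k /negbTE ->].
    by apply: eq_bigr => k ->; rewrite mulr1.
  by rewrite mulr0.
have freq_compl : \sum_(k | ~~ Y i k) q k = 1 - freq Y i.
  by rewrite -q_sum1 freqE [in RHS](bigID (Y i)) /= addrAC subrr add0r.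
have freq01 : 0 <= freq Y i <= 1.
  rewrite freqE sumr_ge0 //= -q_sum1 [leRHS](bigID (Y i)) /= lerDl.
  exact: sumr_ge0.
apply: le_trans (hoeffding_lemma_bernoulli freq01 h).
rewrite (bigID (Y i)) /= addrC; apply: lerD; rewrite le_eqVlt; apply/orP; left.
  rewrite -freq_compl mulr_suml; apply/eqP/eq_bigr => k /negbTE ->.
  by rewrite sub0r mulrN.
rewrite freqE mulr_suml; apply/eqP/eq_bigr => k ->.
by rewrite mulrC.
Qed.

Lemma hoeffding_weighted_freq (Y : 'I_K -> 'I_K -> bool) (c : 'I_K -> R) (eps : R) :
  (0 < K)%N -> (0 < N)%N -> 0 <= eps -> (forall i, `|c i| <= 1) ->
  Pr (fun f => eps < \sum_(i < K) c i * (emp_freq Y f i - freq Y i))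
    <= expR (- (2 * N%:R * eps ^+ 2 / K%:R)).
Proof.
move=> K_gt0 N_gt0 eps_ge0 c_le1.
have K_neq0 : (K%:R : R) != 0 by rewrite pnatr_eq0 -lt0n.
have N_neq0 : (N%:R : R) != 0 by rewrite pnatr_eq0 -lt0n.
(* Chernoff bound, with the optimal parameter s. *)
pose s := 4 * N%:R * eps / K%:R.
pose g (j : 'I_K * 'I_N) k := s * c j.1 / N%:R * ((Y j.1 k : nat)%:R - freq Y j.1).
have sum_g f : s * \sum_(i < K) c i * (emp_freq Y f i - freq Y i) = \sum_j g j (f j).
  rewrite (eq_bigr (fun j => g (j.1, j.2) (f (j.1, j.2)))) => [|[] //].
  rewrite -(pair_bigA _ (fun i tau => g (i, tau) (f (i, tau)))) mulr_sumr.
  apply: eq_bigr => i _.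
  rewrite /g /emp_freq /= -mulr_sumr sumrB sumr_const card_ord -mulr_natr.
  by field.
apply: (le_trans (iid_prob_le_mean (X := fun f => expR (- (s * eps)) *
                                       \prod_j expR (g j (f j))) _ _)).
- by move=> f; rewrite mulr_ge0 ?expR_ge0 ?prodr_ge0 // => j _; apply: expR_ge0.
- move=> f eps_lt; rewrite -expR_sum -sum_g -expRD -expR0 ler_expR.
  rewrite addrC subr_ge0 ler_wpM2l ?(ltW eps_lt) //.
  by rewrite /s !mulr_ge0 ?invr_ge0 ?ler0n.
rewrite iid_meanZ (iid_mean_prod (fun j k => expR (g j k))).
have factor_le j : \sum_(k < K) q k * expR (g j k) <= expR (s ^+ 2 / (8 * N%:R ^+ 2)).
  apply: le_trans (hoeffding_lemma_indicator Y j.1 (s * c j.1 / N%:R)) _.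
  rewrite ler_expR -[leRHS]mul1r.
  rewrite (_ : _ / 8 = c j.1 ^+ 2 * (s ^+ 2 / (8 * N%:R ^+ 2))); last by field.
  rewrite ler_wpM2r ?divr_ge0 ?sqr_ge0 ?mulr_ge0 ?sqr_ge0 //.
  by rewrite -real_normK ?num_real // expr_le1.
apply: (@le_trans _ _ (expR (- (s * eps)) *
                      \prod_(j : 'I_K * 'I_N) expR (s ^+ 2 / (8 * N%:R ^+ 2)))).
  rewrite ler_wpM2l ?expR_ge0 //; apply: ler_prod => j _.
  by rewrite factor_le sumr_ge0 // => k _; rewrite mulr_ge0 ?expR_ge0.
rewrite prodr_const card_prod !card_ord -expRM_natl -expRD natrM.
rewrite ler_expR le_eqVlt; apply/predU1l; rewrite /s.
by field; rewrite K_neq0 N_neq0.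
Qed.

End IidSampling.

Arguments emp_freq {R K N}.

Lemma muln_succ_le_pow7 (T K : nat) :
  (2 <= T)%N -> (K <= T)%N -> (T.+1 * K.+1 * 2 <= T ^ 7)%N.
Proof.
move=> T_ge2 K_le_T; have : (2 ^ 5 <= T ^ 5)%N by rewrite leq_exp2r.
rewrite (_ : 7 = 5 + 2)%N // expnD (_ : T ^ 2 = T * T)%N //; nia.
Qed.

Lemma expR_hoeffding_exponent (R : realType) (K N T : nat) :
  (0 < K)%N -> (0 < N)%N -> (0 < T)%N ->
  expR (- (2 * N%:R * (2 * Num.sqrt (K%:R * ln (T%:R : R) / N%:R)) ^+ 2 / K%:R))
    = (T%:R ^+ 8)^-1.
Proof.
move=> K_gt0 N_gt0 T_gt0.
have K_neq0 : (K%:R : R) != 0 by rewrite pnatr_eq0 -lt0n.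
have N_neq0 : (N%:R : R) != 0 by rewrite pnatr_eq0 -lt0n.
have lnT_ge0 : 0 <= ln (T%:R : R) by rewrite ln_ge0 // ler1n.
rewrite exprMn sqr_sqrtr ?mulr_ge0 ?invr_ge0 ?ler0n //.
rewrite (_ : 2 * _ * _ / _ = 8%:R * ln (T%:R : R)); last by field; rewrite K_neq0 N_neq0.
by rewrite expRN expRM_natl lnK // posrE ltr0n.
Qed.

Section BarycentricEstimate.
Variables (R : realType) (AL : finType) (nf K N T : nat)
  (u : 'I_K -> AL -> 'I_nf.+1 -> R) (q : 'I_K -> R)
  (xb : 'I_K -> AL -> R) (ab : 'I_K -> 'I_nf.+1)
  (lam : {ffun 'I_K -> bool} -> 'I_K -> R) (xs : nat -> AL -> R).
Hypotheses (q_ge0 : forall k, 0 <= q k) (q_sum1 : \sum_(k < K) q k = 1).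
Hypothesis spanner : forall x af, is_mixed x ->
  (forall i, -1 <= lam (ind_vec u x af) i <= 1) /\
  (forall j, ((ind_vec u x af j : nat)%:R : R) =
     \sum_(i < K) lam (ind_vec u x af) i * ((ind_vec u (xb i) (ab i) j : nat)%:R)).
Hypotheses (N_gt0 : (0 < N)%N) (KN_le_T : (K * N <= T)%N).
Hypothesis xs_mixed : forall t, is_mixed (xs t).

Definition spanner_resp (i k : 'I_K) : bool := best_resp (u k) (xb i) == ab i.

Definition phat (f : {ffun 'I_K * 'I_N -> 'I_K}) (w : {ffun 'I_K -> bool}) : R :=
  \sum_(i < K) lam w i * emp_freq spanner_resp f i.

Definition ptrue (w : {ffun 'I_K -> bool}) : R := \sum_(i < K) (w i : nat)%:R * q i.

Lemma phat_sub_ptrue x af f : is_mixed x ->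
  phat f (ind_vec u x af) - ptrue (ind_vec u x af) =
  \sum_(i < K) lam (ind_vec u x af) i *
    (emp_freq spanner_resp f i - freq q spanner_resp i).
Proof.
move=> x_mixed; have [_ coords] := spanner af x_mixed.
rewrite /ptrue; under [X in _ - X]eq_bigr do rewrite coords mulr_suml.
rewrite exchange_big /= -sumrB; apply: eq_bigr => i _.
rewrite mulrBr /freq mulr_sumr; congr (_ - _).
by apply: eq_bigr => k _; rewrite ffunE mulrCA mulrC.
Qed.

(* A vector 1_(sigma^(x) = af) is either that of the best response of some type,
   or zero: per round only K + 1 of them are distinct.  If no action has the zero
   vector, [None] falls back to ord0, repeating a vector already listed. *)
Definition resp_rep (x : AL -> R) (o : option 'I_K) : 'I_nf.+1 :=
  if o is Some k then best_resp (u k) x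
  else odflt ord0 [pick af | ind_vec u x af == [ffun => false]].

Lemma ind_vec_resp_rep x af : exists o, ind_vec u x af = ind_vec u x (resp_rep x o).
Proof.
case: (pickP (fun k => best_resp (u k) x == af)) => [k /eqP <-|none].
  by exists (Some k).
have zero : ind_vec u x af = [ffun => false] by apply/ffunP => k; rewrite !ffunE none.
exists None; rewrite /= zero; case: pickP => [af' /eqP -> // | no_zero].
by have := no_zero af; rewrite zero eqxx.
Qed.

Definition phat_dev f x o :=
  phat f (ind_vec u x (resp_rep x o)) - ptrue (ind_vec u x (resp_rep x o)).

Let eps := 2 * Num.sqrt (K%:R * ln (T%:R : R) / N%:R).

Definition large_dev (j : 'I_T.+1 * option 'I_K) f :=
  (K * N < j.1)%N && (eps < `|phat_dev f (xs j.1) j.2|).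

Lemma eps_ge0 : 0 <= eps.
Proof. by rewrite mulr_ge0 ?sqrtr_ge0. Qed.

Lemma sum_dev_le f : ~~ [exists j, large_dev j f] ->
  \sum_((K * N).+1 <= t < T.+1) \sum_(af : 'I_nf.+1)
      `|phat f (ind_vec u (xs t) af) - ptrue (ind_vec u (xs t) af)|
    <= 2 * (nf.+1)%:R * T%:R * Num.sqrt (K%:R * ln (T%:R : R) / N%:R).
Proof.
rewrite negb_exists => /forallP small.
have small_at t af : (K * N < t <= T)%N ->
    `|phat f (ind_vec u (xs t) af) - ptrue (ind_vec u (xs t) af)| <= eps.
  case/andP=> KN_lt_t t_le_T; have [r ->] := ind_vec_resp_rep (xs t) af.
  by have := small (inord t, r); rewrite /large_dev /= inordK ?ltnS // KN_lt_t -leNgt.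
apply: (@le_trans _ _ (\sum_((K * N).+1 <= t < T.+1) eps *+ nf.+1)).
  apply: ler_sum_nat => t t_range.
  rewrite -[X in _ <= _ *+ X](card_ord nf.+1) -sumr_const.
  by apply: ler_sum => af _; apply: small_at.
rewrite sumr_const_nat subSS -mulr_natr -(mulr_natr (eps * _)).
rewrite (_ : 2 * _ * _ * _ = eps * (nf.+1)%:R * T%:R); last by rewrite /eps; ring.
by rewrite ler_wpM2l ?mulr_ge0 // ler_nat leq_subr.
Qed.

Lemma iid_prob_large_dev_le j : (2 <= T)%N ->
  iid_prob q (large_dev j) <= 2 * (T%:R ^+ 8)^-1.
Proof.
move=> T_ge2; have bound_ge0 : 0 <= 2 * (T%:R ^+ 8 : R)^-1.
  by rewrite mulr_ge0 ?invr_ge0 ?exprn_ge0.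
have [K0|K_gt0] := posnP K.
  rewrite /iid_prob big_pred0 // => f; rewrite /large_dev /phat_dev /phat /ptrue.
  by rewrite !big1 ?subr0 ?normr0 ?ltNge ?eps_ge0 ?andbF // => i; have := ltn_ord i; lia.
have [KN_lt|KN_ge] := ltnP (K * N) j.1; last first.
  by rewrite /iid_prob big_pred0 // => f; rewrite /large_dev ltnNge KN_ge.
have [lam_bounds _] := spanner (resp_rep (xs j.1) j.2) (xs_mixed j.1).
set c := lam _ in lam_bounds.
have c_le1 i : `|c i| <= 1 by rewrite ler_norml.
have cN_le1 i : `|(fun i => - c i) i| <= 1 by rewrite normrN.
have hoeffding := hoeffding_weighted_freq q_ge0 q_sum1 spanner_resp K_gt0 N_gt0 eps_ge0.
rewrite -(expR_hoeffding_exponent R K_gt0 N_gt0 (ltnW T_ge2)) mulr_natl mulr2n.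
apply: le_trans (lerD (hoeffding _ c_le1) (hoeffding _ cN_le1)).
apply: le_trans (iid_prob_or_le q_ge0 _ _); apply: le_iid_prob => // f /andP[_].
rewrite /phat_dev phat_sub_ptrue // ltr_normr => /orP[-> // | ].
by rewrite -sumrN; under eq_bigr do rewrite -mulNr; move=> ->; rewrite orbT.
Qed.

Lemma iid_prob_some_large_dev_le :
  iid_prob q (fun f => [exists j, large_dev j f]) <= T%:R^-1.
Proof.
have [T_le1|T_ge2] := leqP T 1.
  have [T0|T_gt0] := posnP T.
    have -> : T%:R^-1 = 0 :> R by rewrite T0 invr0.
    rewrite /iid_prob big_pred0 // => f; apply/existsP => -[[t r] /andP[/= KN_lt _]].
    by have := ltn_ord t; lia.
  have -> : T%:R^-1 = 1 :> R by rewrite (_ : T = 1)%N ?invr1 //; lia.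
  by rewrite -(iid_prob_predT N q_sum1); apply: le_iid_prob.
have T_gt0 : (0 : R) < T%:R by rewrite ltr0n ltnW.
have count : ((T.+1 * K.+1 * 2)%N%:R : R) <= T%:R ^+ 7.
  by rewrite -natrX ler_nat muln_succ_le_pow7 // (leq_trans _ KN_le_T) ?leq_pmulr.
apply: le_trans (iid_prob_exists_le q_ge0 large_dev) _.
apply: le_trans (ler_sum _ (fun j _ => iid_prob_large_dev_le j T_ge2)) _.
rewrite sumr_const card_prod card_option !card_ord.
rewrite (_ : T%:R^-1 = T%:R ^+ 7 / T%:R ^+ 8); last by field; rewrite lt0r_neq0.
by rewrite -mulrnAl ler_pM2r ?invr_gt0 ?exprn_gt0 // -mulr_natr -natrM mulnC.
Qed.

End BarycentricEstimate.

Theorem mainTheorem10 (R : realType) (AL : finType) (nf K N T : nat)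
  (u : 'I_K -> AL -> 'I_nf.+1 -> R)
  (q : 'I_K -> R)
  (xb : 'I_K -> AL -> R) (ab : 'I_K -> 'I_nf.+1)
  (lam : {ffun 'I_K -> bool} -> 'I_K -> R)
  (xs : nat -> AL -> R) :
  (forall i al af, 0 <= u i al af <= 1) ->
  (forall i, 0 <= q i) -> \sum_(i < K) q i = 1 ->
  (forall i, is_mixed (xb i)) ->
  (* barycentric spanner B = {b^(i) = 1_(sigma^(xb i) = ab i)} of W *)
  (forall x af, is_mixed x ->
     (forall i, -1 <= lam (ind_vec u x af) i <= 1) /\
     (forall j, ((ind_vec u x af j : nat)%:R : R) =
        \sum_(i < K) lam (ind_vec u x af) i * ((ind_vec u (xb i) (ab i) j : nat)%:R))) ->
  (0 < N)%N -> (K * N <= T)%N ->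
  (forall t, is_mixed (xs t)) ->
  let phat_b (f : {ffun 'I_K * 'I_N -> 'I_K}) (i : 'I_K) : R :=
    N%:R^-1 * \sum_(tau < N)
      ((best_resp (u (f (i, tau))) (xb i) == ab i : nat)%:R) in
  let phat f (w : {ffun 'I_K -> bool}) : R := \sum_(i < K) lam w i * phat_b f i in
  let p (w : {ffun 'I_K -> bool}) : R := \sum_(i < K) (w i : nat)%:R * q i in
  iid_prob q (fun f =>
    \sum_((K * N).+1 <= t < T.+1) \sum_(af : 'I_nf.+1)
        `|phat f (ind_vec u (xs t) af) - p (ind_vec u (xs t) af)|
      <= 2 * (nf.+1)%:R * T%:R * Num.sqrt (K%:R * ln (T%:R : R) / N%:R))
  >= 1 - T%:R^-1.
Proof.
move=> _ q_ge0 q_sum1 _ spanner N_gt0 KN_le_T xs_mixed.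
have large_dev_rare :=
  iid_prob_some_large_dev_le q_ge0 q_sum1 spanner N_gt0 KN_le_T xs_mixed.
apply: le_trans (le_iid_prob q_ge0 (fun f => sum_dev_le (f := f))).
by rewrite iid_probC // lerD2l lerN2.
Qed.
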